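(* Let $Q=(q_1,\dots,q_n)$ with $q_i\in\mathbb C\setminus\{0,1\}$ and $\Lambda=(\lambda_{ij})$ an $n\times n$ matrix over $\mathbb C\setminus\{0\}$ with $\lambda_{ii}=1$, $\lambda_{ij}=\lambda_{ji}^{-1}$, such that the group $G(Q,\Lambda)\subseteq\mathbb C^\times$ generated by all $q_i,\lambda_{ij}$ is torsion free; let $\eta_1,\dots,\eta_r$ be a basis of it, $\{\mu_1,\dots,\mu_r\}\subset\mathbb C$ a $\mathbb Q$-linearly independent set, and $d:G(Q,\Lambda)\to\mathbb C$ the homomorphism $d(\eta_1^{s_1}\cdots\eta_r^{s_r})=\sum_i s_i\mu_i$. Let $A_q$ be the $\mathbb C$-algebra generated by $y_1,x_1,\dots,y_n,x_n$ with relations, for $i<j$: $y_jy_i=\lambda_{ji}y_iy_j$, $y_jx_i=\lambda_{ij}x_iy_j$, $x_jy_i=q_i\lambda_{ij}y_ix_j$, $x_jx_i=q_i^{-1}\lambda_{ij}^{-1}x_ix_j$, and for all $i$: $x_iy_i-q_iy_ix_i=(q_i-1)(1+\sum_{k<i}y_kx_k)$. Let $A_1$ be the Poisson algebra $\mathbb C[y_1,x_1,\dots,y_n,x_n]$ with bracket, for $i<j$: $\{y_j,y_i\}=d(\lambda_{ji})y_iy_j$, $\{y_j,x_i\}=d(\lambda_{ij})x_iy_j$, $\{x_j,y_i\}=(d(q_i)+d(\lambda_{ij}))y_ix_j$, $\{x_j,x_i\}=-(d(q_i)+d(\lambda_{ij}))x_ix_j$, and for all $i$: $\{x_i,y_i\}=d(q_i)(1+\sum_{k\le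 i}y_kx_k)$. In both algebras put $z_i=1+\sum_{k=1}^iy_kx_k$ and $\mathcal M_n=\{z_1,z_2,y_2,x_2,z_3,y_3,x_3,\dots,z_n,y_n,x_n\}$. Call $T\subseteq\mathcal M_n$ admissible if for every $2\le i\le n$: ($y_i\in T$ or $x_i\in T$) if and only if ($z_i\in T$ and $z_{i-1}\in T$). Then: (1) for every prime ideal $P$ of $A_q$, $P\cap\mathcal M_n$ is admissible; (2) for every Poisson prime ideal $P$ of $A_1$, $P\cap\mathcal M_n$ is admissible.
   Context: A Poisson ideal $P$ of $A_1$ is an ideal with $\{P,A_1\}\subseteq P$; it is Poisson prime if for Poisson ideals $I,J$, $IJ\subseteq P$ implies $I\subseteq P$ or $J\subseteq P$. ($A_1$ coincides with the semiclassical limit $A/(t-1)A$ of a one-parameter deformation whose specialization is $A_q$.) *)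

From Stdlib Require Reals.
From mathcomp Require Import all_boot all_algebra.
From mathcomp Require Import Rstruct complex.
From mathcomp Require Import mpoly.
Set Implicit Arguments. Unset Strict Implicit. Unset Printing Implicit Defensive.
Import GRing.Theory Num.Theory.
Local Open Scope ring_scope.

Definition Cc : fieldType := (Rdefinitions.R)[i].

(* g lies in the subgroup of C^x generated by q_1..q_n and the lambda_ij
   (C^x is abelian, so the generated subgroup is the set of such products). *)
Definition inG (n : nat) (q : nat -> Cc) (lam : nat -> nat -> Cc) (g : Cc) : Prop :=
  exists (a : nat -> int) (b : nat -> nat -> int),
    g = (\prod_(1 <= i < n.+1) q i ^ a i) *
        \prod_(1 <= i < n.+1) \prod_(1 <= j < n.+1) lam i j ^ b i j.

Definition torsion_freeG n q lam : Prop :=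
  forall (g : Cc) (m : nat), inG n q lam g -> (0 < m)%N -> g ^+ m = 1 -> g = 1.

Definition is_basisG n q lam (r : nat) (eta : 'I_r -> Cc) : Prop :=
  (forall k, inG n q lam (eta k)) /\
  (forall g, inG n q lam g ->
     exists! s : {ffun 'I_r -> int}, g = \prod_(k < r) eta k ^ s k).

Definition Qlin_indep (r : nat) (mu : 'I_r -> Cc) : Prop :=
  forall c : {ffun 'I_r -> rat},
    \sum_(k < r) ratr (c k) * mu k = 0 -> forall k, c k = 0.

(* d(eta_1^s_1 ... eta_r^s_r) = sum_i s_i mu_i  (d only matters on G) *)
Definition d_spec (r : nat) (eta mu : 'I_r -> Cc) (d : Cc -> Cc) : Prop :=
  forall s : {ffun 'I_r -> int},
    d (\prod_(k < r) eta k ^ s k) = \sum_(k < r) (s k)%:~R * mu k.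

Definition is_ideal (A : pzRingType) (I : A -> Prop) : Prop :=
  I 0 /\ (forall a b, I a -> I b -> I (a + b)) /\
  (forall a b, I b -> I (a * b) /\ I (b * a)).

(* I J subset P, i.e. all products a*b (a in I, b in J) lie in P *)
Definition prod_sub (A : pzRingType) (I J P : A -> Prop) : Prop :=
  forall a b, I a -> J b -> P (a * b).

Definition prime_ideal (A : pzRingType) (P : A -> Prop) : Prop :=
  is_ideal P /\ ~ P 1 /\
  forall I J, is_ideal I -> is_ideal J -> prod_sub I J P ->
    (forall a, I a -> P a) \/ (forall a, J a -> P a).

Definition relsq (n : nat) (q : nat -> Cc) (lam : nat -> nat -> Cc)
  (B : algType Cc) (y x : nat -> B) : Prop :=
  (forall i j, (1 <= i)%N -> (i < j)%N -> (j <= n)%N ->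
     [/\ y j * y i = lam j i *: (y i * y j),
         y j * x i = lam i j *: (x i * y j),
         x j * y i = (q i * lam i j) *: (y i * x j) &
         x j * x i = ((q i)^-1 * (lam i j)^-1) *: (x i * x j)]) /\
  (forall i, (1 <= i <= n)%N ->
     x i * y i - q i *: (y i * x i) =
     (q i - 1) *: (1 + \sum_(1 <= k < i) y k * x k)).

Definition alg_morph (B C : algType Cc) (f : B -> C) : Prop :=
  [/\ forall a b, f (a + b) = f a + f b,
      forall a b, f (a * b) = f a * f b,
      f 1 = 1 &
      forall (c : Cc) a, f (c *: a) = c *: f a].

(* (B; y, x) is the C-algebra presented by generators y_i, x_i (1 <= i <= n)
   and the relations relsq: the relations hold, and it has the universal
   property of the presented algebra. *)
Definition is_Aq (n : nat) (q : nat -> Cc) (lam : nat -> nat -> Cc)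
  (B : algType Cc) (y x : nat -> B) : Prop :=
  relsq n q lam y x /\
  forall (C : algType Cc) (y' x' : nat -> C), relsq n q lam y' x' ->
    (exists f : B -> C, alg_morph f /\
        forall i, (1 <= i <= n)%N -> f (y i) = y' i /\ f (x i) = x' i) /\
    (forall f g : B -> C, alg_morph f -> alg_morph g ->
        (forall i, (1 <= i <= n)%N -> f (y i) = g (y i) /\ f (x i) = g (x i)) ->
        forall b, f b = g b).

Definition zgen (B : pzRingType) (y x : nat -> B) (i : nat) : B :=
  1 + \sum_(1 <= k < i.+1) y k * x k.

Definition admissible (B : Type) (n : nat) (P : B -> Prop) (y x z : nat -> B) : Prop :=
  forall i, (2 <= i <= n)%N ->
    ((P (y i) \/ P (x i)) <-> (P (z i) /\ P (z i.-1))).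

(* Variables: y_i is 'X_(2(i-1)), x_i is 'X_(2(i-1)+1), for 1 <= i <= n. *)

Definition var1 (n k : nat) : {mpoly Cc[n.*2]} :=
  if @insub _ (fun m => (m < n.*2)%N) 'I_(n.*2) k is Some a then 'X_a else 0.
Arguments var1 : clear implicits.

Definition Y1 (n i : nat) : {mpoly Cc[n.*2]} := var1 n (i.-1).*2.
Definition X1 (n i : nat) : {mpoly Cc[n.*2]} := var1 n (i.-1).*2.+1.
Arguments Y1 : clear implicits.
Arguments X1 : clear implicits.

(* bracket of generators for i < j:  {g_j, g_i}, where kind false = y,
   true = x *)
Definition brlt (n : nat) (d : Cc -> Cc) (q : nat -> Cc) (lam : nat -> nat -> Cc)
  (j : nat) (kj : bool) (i : nat) (ki : bool) : {mpoly Cc[n.*2]} :=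
  match kj, ki with
  | false, false => d (lam j i) *: (Y1 n i * Y1 n j)
  | false, true  => d (lam i j) *: (X1 n i * Y1 n j)
  | true, false  => (d (q i) + d (lam i j)) *: (Y1 n i * X1 n j)
  | true, true   => - ((d (q i) + d (lam i j)) *: (X1 n i * X1 n j))
  end.
Arguments brlt : clear implicits.

Definition brgen (n : nat) (d : Cc -> Cc) (q : nat -> Cc) (lam : nat -> nat -> Cc)
  (j : nat) (kj : bool) (i : nat) (ki : bool) : {mpoly Cc[n.*2]} :=
  if (i < j)%N then brlt n d q lam j kj i ki
  else if (j < i)%N then - brlt n d q lam i ki j kj
  else
    match kj, ki with
    | true, false => d (q i) *: zgen (Y1 n) (X1 n) i
    | false, true => - (d (q i) *: zgen (Y1 n) (X1 n) i)
    | _, _ => 0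
    end.
Arguments brgen : clear implicits.

(* the Poisson bracket: the biderivation extending brgen *)
Definition pbr (n : nat) (d : Cc -> Cc) (q : nat -> Cc) (lam : nat -> nat -> Cc)
  (f g : {mpoly Cc[n.*2]}) : {mpoly Cc[n.*2]} :=
  \sum_(a < n.*2) \sum_(b < n.*2)
     (mderiv a f * mderiv b g) * brgen n d q lam (a./2).+1 (odd a) (b./2).+1 (odd b).
Arguments pbr : clear implicits.

Definition poisson_ideal n d q lam (P : {mpoly Cc[n.*2]} -> Prop) : Prop :=
  is_ideal P /\ forall a b, P a -> P (pbr n d q lam a b).
Arguments poisson_ideal : clear implicits.

Definition poisson_prime n d q lam (P : {mpoly Cc[n.*2]} -> Prop) : Prop :=
  poisson_ideal n d q lam P /\
  forall I J, poisson_ideal n d q lam I -> poisson_ideal n d q lam J ->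
    prod_sub I J P -> (forall a, I a -> P a) \/ (forall a, J a -> P a).

Arguments poisson_prime : clear implicits.

(** In both algebras [z_i = z_(i-1) + y_i x_i], and the defining relation
    [x_i y_i - q_i y_i x_i = (q_i - 1) z_(i-1)], resp. the bracket
    [{y_i, x_i} = - d(q_i) z_i], shows that [y_i] or [x_i] in [P] forces [z_i] and
    [z_(i-1)] into [P], because [q_i <> 1], resp. [d(q_i) <> 0] ([d] has trivial
    kernel on [G(Q, Lambda)]).  Conversely, if [z_i] and [z_(i-1)] lie in [P] then
    so does [y_i x_i]; in [A_q] the element [y_i] is normal modulo [P], and in [A_1]
    the ideals [P + (y_i)] and [P + (x_i)] are Poisson, so in both cases primality
    puts [y_i] or [x_i] into [P]. *)

From HB Require Import structures.
From mathcomp Require Import all_boot all_algebra.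
From mathcomp Require Import Rstruct complex.
From mathcomp Require Import mpoly.
From mathcomp Require boolp.
Set Implicit Arguments. Unset Strict Implicit. Unset Printing Implicit Defensive.
Import GRing.Theory Num.Theory.
Local Open Scope ring_scope.

Section RingIdeals.
Variables (R : pzRingType) (P : R -> Prop).
Hypothesis P_ideal : is_ideal P.

Lemma ideal0 : P 0.
Proof. by case: P_ideal. Qed.

Lemma idealD a b : P a -> P b -> P (a + b).
Proof. by case: P_ideal => _ [+ _]; apply. Qed.

Lemma idealMl a b : P b -> P (a * b).
Proof. by case: P_ideal => _ [_ idM] /(idM a) []. Qed.

Lemma idealMr a b : P a -> P (a * b).
Proof. by case: P_ideal => _ [_ idM] /(idM b) []. Qed.

Lemma idealN a : P a -> P (- a).
Proof. by rewrite -mulN1r; apply: idealMl. Qed.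

Lemma idealB a b : P a -> P b -> P (a - b).
Proof. by move=> Pa /idealN; apply: idealD. Qed.

End RingIdeals.

Section AlgebraIdeals.
Variables (F : fieldType) (A : lalgType F) (P : A -> Prop).
Hypothesis P_ideal : is_ideal P.

Lemma idealZ c a : P a -> P (c *: a).
Proof. by rewrite -mulr_algl; apply: (idealMl P_ideal). Qed.

Lemma idealZV c a : c != 0 -> P (c *: a) -> P a.
Proof. by move=> c_neq0 /(idealZ c^-1); rewrite scalerA mulVf // scale1r. Qed.

End AlgebraIdeals.

Section PrimeIdeals.
Variables (R : pzRingType) (P : R -> Prop).
Hypothesis primeP : prime_ideal P.

Lemma prime_ideal_sandwich a b : (forall w, P (a * w * b)) -> P a \/ P b.
Proof.
case: primeP => P_ideal [_ primeIJ] Pawb.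
pose I u := forall w, P (u * w * b).
pose J v := forall u, I u -> forall w, P (u * w * v).
have I_ideal : is_ideal I.
  split; first by move=> w; rewrite !mul0r; apply: (ideal0 P_ideal).
  split; first by move=> u v Iu Iv w; rewrite !mulrDl; apply: (idealD P_ideal).
  move=> u v Iv; split=> w; last by rewrite -(mulrA v u); apply: Iv.
  by rewrite -!mulrA; apply: (idealMl P_ideal); rewrite !mulrA; apply: Iv.
have idJ : is_ideal J.
  split; first by move=> u _ w; rewrite mulr0; apply: (ideal0 P_ideal).
  split=> [v v' Jv Jv' u Iu w | u v Jv].
    by rewrite mulrDr; apply: (idealD P_ideal); [apply: Jv | apply: Jv'].
  split=> u' Iu' w; first by rewrite mulrA -(mulrA u'); apply: Jv.
  by rewrite mulrA; apply: (idealMr P_ideal); apply: Jv.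
have IJ_sub : prod_sub I J P by move=> u v Iu Jv; rewrite -[u]mulr1; apply: Jv.
by case: (primeIJ I J I_ideal idJ IJ_sub) => sub; [left | right]; apply: sub.
Qed.

Definition commute_mod (a w : R) := exists w', P (a * w - w' * a).

Lemma prime_ideal_normal a b :
  (forall w, commute_mod a w) -> P (a * b) -> P a \/ P b.
Proof.
case: primeP => P_ideal _ normal_a Pab; apply: prime_ideal_sandwich => w.
have [w' Pw'] := normal_a w.
have -> : a * w * b = (a * w - w' * a) * b + w' * (a * b) by rewrite mulrBl -!mulrA subrK.
by apply: (idealD P_ideal) => //; [apply: (idealMr P_ideal) | apply: (idealMl P_ideal)].
Qed.

End PrimeIdeals.

Section CommuteMod.
Variables (F : fieldType) (A : algType F) (P : A -> Prop) (a : A).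
Hypothesis P_ideal : is_ideal P.

Lemma commute_mod_skew w c : a * w = c *: (w * a) -> commute_mod P a w.
Proof. by move=> aw; exists (c *: w); rewrite aw -scalerAl subrr; apply: (ideal0 P_ideal). Qed.

Lemma commute_mod1 : commute_mod P a 1.
Proof. by apply: (@commute_mod_skew _ 1); rewrite scale1r mulr1 mul1r. Qed.

Lemma commute_modD w v : commute_mod P a w -> commute_mod P a v -> commute_mod P a (w + v).
Proof.
move=> [w' Pw] [v' Pv]; exists (w' + v').
by rewrite mulrDr mulrDl opprD addrACA; apply: (idealD P_ideal).
Qed.

Lemma commute_modM w v : commute_mod P a w -> commute_mod P a v -> commute_mod P a (w * v).
Proof.
move=> [w' Pw] [v' Pv]; exists (w' * v').
have -> : a * (w * v) - w' * v' * a = (a * w - w' * a) * v + w' * (a * v - v' * a).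
  by rewrite mulrBl mulrBr !mulrA addrA subrK.
by apply: (idealD P_ideal); [apply: (idealMr P_ideal) | apply: (idealMl P_ideal)].
Qed.

Lemma commute_modZ c w : commute_mod P a w -> commute_mod P a (c *: w).
Proof.
move=> [w' Pw]; exists (c *: w').
by rewrite -scalerAl -scalerAr -scalerBr; apply: (idealZ P_ideal).
Qed.

End CommuteMod.

Section ZgenIdeals.
Variables (R : pzRingType) (P : R -> Prop) (y x : nat -> R) (i : nat).
Hypotheses (P_ideal : is_ideal P) (i_gt0 : (0 < i)%N).

Lemma zgen_rec : zgen y x i = zgen y x i.-1 + y i * x i.
Proof. by rewrite /zgen (prednK i_gt0) big_nat_recr //= addrA. Qed.

Lemma ideal_zgen_step : P (y i * x i) -> P (zgen y x i) <-> P (zgen y x i.-1).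
Proof.
move=> Pyx; rewrite zgen_rec; split=> [Pz | Pz]; last exact: (idealD P_ideal).
by rewrite -(addrK (y i * x i) (zgen y x i.-1)); apply: (idealB P_ideal).
Qed.

Lemma ideal_zgen_diff : P (zgen y x i) -> P (zgen y x i.-1) -> P (y i * x i).
Proof.
by move=> Pz Pz'; have := idealB P_ideal Pz Pz'; rewrite zgen_rec addrAC subrr add0r.
Qed.

End ZgenIdeals.

Section PresentationInduction.
Variables (n : nat) (q : nat -> Cc) (lam : nat -> nat -> Cc) (B : algType Cc).
Variables (y x : nat -> B) (S : pred B).
Hypothesis S_closed : GRing.subsemialg_closed S.

Let subS := {b : B | S b}.
HB.instance Definition _ := [isSub for (@sval B S) : subS -> B].
HB.instance Definition _ := [Choice of subS by <:].
HB.instance Definition _ := GRing.SubChoice_isSubAlgebra.Build _ _ _ subS S_closed.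

(* The universal property retracts [B] onto the subalgebra [S]. *)
Lemma is_Aq_subalg : is_Aq n q lam y x ->
  (forall i, (1 <= i <= n)%N -> S (y i) /\ S (x i)) -> forall b, S b.
Proof.
move=> [[rel_lt rel_eq] univ] S_gens.
pose y' k : subS := insubd 0 (y k); pose x' k : subS := insubd 0 (x k).
have y'K k : (1 <= k <= n)%N -> sval (y' k) = y k.
  by move=> k_range; rewrite insubdK //; case: (S_gens k k_range).
have x'K k : (1 <= k <= n)%N -> sval (x' k) = x k.
  by move=> k_range; rewrite insubdK //; case: (S_gens k k_range).
have rel' : relsq n q lam y' x'.
  split=> [i j i_ge1 lt_ij j_le | i i_range].
    have i_range : (1 <= i <= n)%N by rewrite i_ge1 (leq_trans (ltnW lt_ij)).
    have j_range : (1 <= j <= n)%N by rewrite j_le (leq_trans i_ge1 (ltnW lt_ij)).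
    have [e1 e2 e3 e4] := rel_lt i j i_ge1 lt_ij j_le.
    by split; apply: val_inj; rewrite !linearZ !rmorphM /= ?y'K ?x'K.
  apply: val_inj; rewrite rmorphB !linearZ rmorphD rmorph1 raddf_sum !rmorphM /=.
  rewrite y'K // x'K // scalerN rel_eq //; congr (_ *: (1 + _)).
  apply: eq_big_nat => k /andP [k_ge1 lt_ki].
  have k_range : (1 <= k <= n)%N.
    by rewrite k_ge1 (leq_trans (ltnW lt_ki)) //; case/andP: i_range.
  by rewrite y'K // x'K.
have [[f [[fD fM f1 fZ] f_gens]] _] := univ _ y' x' rel'.
have [_ univ_eq] := univ B y x (conj rel_lt rel_eq).
have valf : alg_morph (fun b => val (f b)).
  by split=> [a b | a b | | c a]; rewrite ?fD ?fM ?f1 ?fZ ?rmorphD ?rmorphM ?rmorph1 ?linearZ.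
have agree i : (1 <= i <= n)%N -> val (f (y i)) = y i /\ val (f (x i)) = x i.
  by move=> i_range; have [-> ->] := f_gens i i_range; rewrite /= y'K // x'K.
by move=> b; rewrite -[b]/(idfun b) -(univ_eq _ idfun valf _ agree b) //; apply: valP.
Qed.

End PresentationInduction.

Lemma is_Aq_ind n q lam (B : algType Cc) (y x : nat -> B) (S : B -> Prop) :
  is_Aq n q lam y x -> S 1 -> (forall a b, S a -> S b -> S (a + b)) ->
  (forall a b, S a -> S b -> S (a * b)) -> (forall c a, S a -> S (c *: a)) ->
  (forall i, (1 <= i <= n)%N -> S (y i) /\ S (x i)) -> forall b, S b.
Proof.
move=> Aq S1 SD SM SZ S_gens b; apply/boolp.asboolP.
have S0 : S 0 by rewrite -(scale0r 1); apply: SZ.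
have closed : GRing.subsemialg_closed (fun b => boolp.asbool (S b)).
  split; rewrite ?unfold_in; first exact/boolp.asboolP.
  - split; rewrite ?unfold_in; first exact/boolp.asboolP.
    move=> u v; rewrite !unfold_in => /boolp.asboolP Su /boolp.asboolP Sv.
    exact/boolp.asboolP/SD.
  - by move=> c u; rewrite !unfold_in => /boolp.asboolP Su; apply/boolp.asboolP/SZ.
  - move=> u v; rewrite !unfold_in => /boolp.asboolP Su /boolp.asboolP Sv.
    exact/boolp.asboolP/SM.
apply: (is_Aq_subalg closed Aq) => i i_range.
by have [Sy Sx] := S_gens i i_range; split; apply/boolp.asboolP.
Qed.

Section QuantumAlgebra.
Variables (n : nat) (q : nat -> Cc) (lam : nat -> nat -> Cc).
Variables (B : algType Cc) (y x : nat -> B).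
Hypotheses (Aq : is_Aq n q lam y x)
  (q_neq0 : forall i, (1 <= i <= n)%N -> q i != 0)
  (lam_neq0 : forall i j, (1 <= i <= n)%N -> (1 <= j <= n)%N -> lam i j != 0).

Lemma Aq_rel_zgen i : (1 <= i <= n)%N ->
  x i * y i = q i *: (y i * x i) + (q i - 1) *: zgen y x i.-1.
Proof.
case: Aq => [[_ rel_eq] _] i_range; have [i_gt0 _] := andP i_range.
by rewrite /zgen prednK // -rel_eq // addrC subrK.
Qed.

Lemma Aq_y_normal (P : B -> Prop) i : is_ideal P -> (1 <= i <= n)%N ->
  P (zgen y x i.-1) -> forall w, commute_mod P (y i) w.
Proof.
move=> P_ideal i_range Pz; have [[rel_lt _] _] := Aq; have [i_ge1 i_le] := andP i_range.
apply: (is_Aq_ind Aq).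
- exact: commute_mod1.
- exact: commute_modD.
- exact: commute_modM.
- exact: commute_modZ.
move=> j j_range; have [j_ge1 j_le] := andP j_range.
case: (ltngtP j i) => [lt_ji | lt_ij | ->].
- have [yy yx _ _] := rel_lt j i j_ge1 lt_ji i_le.
  by split; [apply: (commute_mod_skew P_ideal yy) | apply: (commute_mod_skew P_ideal yx)].
- have [yy _ xy _] := rel_lt i j i_ge1 lt_ij j_le.
  have lam_ji := lam_neq0 j_range i_range.
  have qlam_ij : q i * lam i j != 0 by rewrite mulf_neq0 ?q_neq0 ?lam_neq0.
  split; [apply: (commute_mod_skew P_ideal (c := (lam j i)^-1)) |
          apply: (commute_mod_skew P_ideal (c := (q i * lam i j)^-1))].
  + by rewrite yy scalerA mulVf // scale1r.
  + by rewrite xy scalerA mulVf // scale1r.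
split; first by apply: (commute_mod_skew P_ideal (c := 1)); rewrite scale1r.
exists ((q i)^-1 *: x i).
have -> : y i * x i - (q i)^-1 *: x i * y i = - ((q i)^-1 * (q i - 1)) *: zgen y x i.-1.
  rewrite -scalerAl Aq_rel_zgen // scalerDr !scalerA mulVf ?q_neq0 // scale1r.
  by rewrite opprD addrA subrr add0r scaleNr.
exact: (idealZ P_ideal).
Qed.

Lemma Aq_admissible (P : B -> Prop) :
  (forall i, (1 <= i <= n)%N -> q i != 1) -> prime_ideal P ->
  admissible n P y x (zgen y x).
Proof.
move=> q_neq1 primeP i /andP [i_ge2 i_le]; have [P_ideal _] := primeP.
have i_gt0 : (0 < i)%N := ltnW i_ge2.
have i_range : (1 <= i <= n)%N by rewrite i_gt0.
split=> [P_gen | [Pz Pz']].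
- have [Pyx Pxy] : P (y i * x i) /\ P (x i * y i).
    by case: P_gen => Pg; split; by [apply: (idealMr P_ideal) | apply: (idealMl P_ideal)].
  have Pz' : P (zgen y x i.-1).
    apply: (idealZV P_ideal (c := q i - 1)); first by rewrite subr_eq0 q_neq1.
    have -> : (q i - 1) *: zgen y x i.-1 = x i * y i - q i *: (y i * x i).
      by rewrite Aq_rel_zgen // [q i *: _ + _]addrC addrK.
    by apply: (idealB P_ideal) => //; apply: (idealZ P_ideal).
  by split=> //; apply/(ideal_zgen_step P_ideal i_gt0 Pyx).
- apply: (prime_ideal_normal primeP (Aq_y_normal P_ideal i_range Pz')).
  exact: (ideal_zgen_diff P_ideal i_gt0 Pz Pz').
Qed.

End QuantumAlgebra.

Section IdealPlus.
Variables (R : comPzRingType) (P : R -> Prop).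
Hypothesis P_ideal : is_ideal P.

Definition ideal_plus (g a : R) := exists c, P (a - c * g).

Lemma ideal_plus_sub g a : P a -> ideal_plus g a.
Proof. by exists 0; rewrite mul0r subr0. Qed.

Lemma ideal_plus_gen g : ideal_plus g g.
Proof. by exists 1; rewrite mul1r subrr; apply: (ideal0 P_ideal). Qed.

Lemma ideal_plus_ideal g : is_ideal (ideal_plus g).
Proof.
split; first by apply: ideal_plus_sub; apply: (ideal0 P_ideal).
split=> [a b [c Pa] [c' Pb] | a b [c Pb]].
  exists (c + c'); rewrite mulrDl opprD addrACA; exact: (idealD P_ideal).
suff Pab : ideal_plus g (a * b) by split; rewrite // mulrC.
by exists (a * c); rewrite -mulrA -mulrBr; apply: (idealMl P_ideal).
Qed.

Lemma ideal_plus_mul g h : P (g * h) -> prod_sub (ideal_plus g) (ideal_plus h) P.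
Proof.
move=> Pgh a b [c Pa] [c' Pb].
have -> : a * b = (a - c * g) * b + c * g * (b - c' * h) + c * c' * (g * h).
  by rewrite mulrBl mulrBr mulrACA addrA !subrK.
apply: (idealD P_ideal); last exact: (idealMl P_ideal).
by apply: (idealD P_ideal); [apply: (idealMr P_ideal) | apply: (idealMl P_ideal)].
Qed.

End IdealPlus.

Lemma mderiv_var (R : nzRingType) (m : nat) (a u : 'I_m) :
  mderiv a ('X_u : {mpoly R[m]}) = (u == a)%:R.
Proof.
rewrite mderivX mnm1E; case: eqP => [->|_]; last by rewrite scale0r.
have -> : (U_(a) - U_(a))%MM = 0%MM by apply/mnmP => j; rewrite mnmBE subnn mnm0E.
by rewrite mpolyX0 scale1r.
Qed.

Definition A1gen (n i : nat) (k : bool) : {mpoly Cc[n.*2]} := if k then X1 n i else Y1 n i.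

Lemma A1gen_var n i k : (1 <= i <= n)%N ->
  exists u : 'I_(n.*2), [/\ A1gen n i k = 'X_u, (u./2).+1 = i & odd u = k].
Proof.
case/andP=> i_gt0 i_le; rewrite /A1gen /X1 /Y1 /var1.
case: k.
- have lt_u : ((i.-1).*2.+1 < n.*2)%N by rewrite -doubleS leq_double prednK.
  by exists (Ordinal lt_u); rewrite insubT /= uphalf_double odd_double prednK.
- have lt_u : ((i.-1).*2 < n.*2)%N by rewrite ltn_double prednK.
  by exists (Ordinal lt_u); rewrite insubT /= doubleK odd_double prednK.
Qed.

Section PoissonBracket.
Variables (n : nat) (d : Cc -> Cc) (q : nat -> Cc) (lam : nat -> nat -> Cc).
Local Notation pb := (pbr n d q lam).
Local Notation brvar u v :=
  (brgen n d q lam (nat_of_ord u)./2.+1 (odd u) (nat_of_ord v)./2.+1 (odd v)).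

Lemma pbrDl f g h : pb (f + g) h = pb f h + pb g h.
Proof.
rewrite /pbr -big_split; apply: eq_bigr => a _.
by rewrite -big_split; apply: eq_bigr => b _; rewrite mderivD !mulrDl.
Qed.

Lemma pbrMl f g h : pb (f * g) h = f * pb g h + g * pb f h.
Proof.
rewrite /pbr !mulr_sumr -big_split; apply: eq_bigr => a _.
rewrite !mulr_sumr -big_split; apply: eq_bigr => b _.
by rewrite mderivM !mulrDl addrC !mulrA [_ * g]mulrC.
Qed.

Lemma pbr_var (u v : 'I_(n.*2)) : pb 'X_u 'X_v = brvar u v.
Proof.
rewrite /pbr (bigD1 u) //= addrC big1 ?add0r => [|a neq_au]; last first.
  by apply: big1 => b _; rewrite mderiv_var eq_sym (negbTE neq_au) !mul0r.
rewrite (bigD1 v) //= addrC big1 ?add0r => [|b neq_bv]; last first.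
  by rewrite !mderiv_var eq_sym (negbTE neq_bv) mulr0 mul0r.
by rewrite !mderiv_var !eqxx !mul1r.
Qed.

Lemma pbr_var_ideal (I : {mpoly Cc[n.*2]} -> Prop) u h :
  is_ideal I -> (forall v : 'I_(n.*2), I (brvar u v)) -> I (pb 'X_u h).
Proof.
move=> I_ideal I_br.
apply: (big_ind I) => [||a _]; [exact: (ideal0 I_ideal) | exact: (idealD I_ideal) |].
apply: (big_ind I) => [||b _]; [exact: (ideal0 I_ideal) | exact: (idealD I_ideal) |].
rewrite mderiv_var; case: eqP => [<- | _]; first exact: (idealMl I_ideal).
by rewrite !mul0r; apply: (ideal0 I_ideal).
Qed.

Lemma brgen_ideal (I : {mpoly Cc[n.*2]} -> Prop) i k :
  is_ideal I -> I (A1gen n i k) -> I (zgen (Y1 n) (X1 n) i) ->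
  forall j k', I (brgen n d q lam i k j k').
Proof.
move=> I_ideal Igen Iz j k'; rewrite /brgen /brlt.
case: ltnP => [_ | le_ji]; [| case: ltnP => [_ | le_ij]]; last first.
  have -> : j = i by apply/eqP; rewrite eqn_leq le_ji le_ij.
  by case: k {Igen}; case: k'; repeat first [exact: Iz | exact: (ideal0 I_ideal)
                                             | apply: (idealN I_ideal) | apply: (idealZ I_ideal)].
all: by case: k Igen; case: k' => Igen;
  repeat first [exact: (ideal0 I_ideal) | apply: (idealN I_ideal) | apply: (idealZ I_ideal)
               | exact: (idealMl I_ideal _ Igen) | exact: (idealMr I_ideal _ Igen)].
Qed.

Lemma poisson_ideal_plus_var (P : {mpoly Cc[n.*2]} -> Prop) u :
  poisson_ideal n d q lam P -> (forall v : 'I_(n.*2), ideal_plus P 'X_u (brvar u v)) ->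
  poisson_ideal n d q lam (ideal_plus P 'X_u).
Proof.
move=> [P_ideal P_br] I_br; have I_ideal := ideal_plus_ideal P_ideal 'X_u.
split=> [// | a h [c Pa]].
rewrite -(subrK (c * 'X_u) a) pbrDl pbrMl.
apply: (idealD I_ideal); first by apply: ideal_plus_sub; apply: P_br.
apply: (idealD I_ideal); first by apply: (idealMl I_ideal); apply: pbr_var_ideal.
by apply: (idealMr I_ideal); apply: (ideal_plus_gen P_ideal).
Qed.

Lemma A1_admissible (P : {mpoly Cc[n.*2]} -> Prop) :
  (forall i, (1 <= i <= n)%N -> d (q i) != 0) -> poisson_prime n d q lam P ->
  admissible n P (Y1 n) (X1 n) (zgen (Y1 n) (X1 n)).
Proof.
move=> dq_neq0 [[P_ideal P_br] primeP] i /andP [i_ge2 i_le].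
have i_gt0 : (0 < i)%N := ltnW i_ge2.
have i_range : (1 <= i <= n)%N by rewrite i_gt0.
have [u [Yu u_idx u_odd]] := A1gen_var false i_range.
have [v [Xv v_idx v_odd]] := A1gen_var true i_range.
have br_YX : pb (Y1 n i) (X1 n i) = - (d (q i) *: zgen (Y1 n) (X1 n) i).
  by rewrite -[Y1 n i]/(A1gen n i false) -[X1 n i]/(A1gen n i true) Yu Xv pbr_var
             u_idx u_odd v_idx v_odd /brgen ltnn.
have br_XY : pb (X1 n i) (Y1 n i) = d (q i) *: zgen (Y1 n) (X1 n) i.
  by rewrite -[Y1 n i]/(A1gen n i false) -[X1 n i]/(A1gen n i true) Yu Xv pbr_var
             u_idx u_odd v_idx v_odd /brgen ltnn.
split=> [P_gen | [Pz Pz']].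
- have Pyx : P (Y1 n i * X1 n i).
    by case: P_gen => Pg; [apply: (idealMr P_ideal) | apply: (idealMl P_ideal)].
  suff Pz : P (zgen (Y1 n) (X1 n) i) by split; last apply/(ideal_zgen_step P_ideal i_gt0 Pyx).
  apply: (idealZV P_ideal (dq_neq0 i i_range)); case: P_gen => Pg.
  + by rewrite -[_ *: _]opprK -br_YX; apply/(idealN P_ideal)/P_br.
  + by rewrite -br_XY; apply: P_br.
- have Pyx := ideal_zgen_diff P_ideal i_gt0 Pz Pz'.
  have plus_poisson k : poisson_ideal n d q lam (ideal_plus P (A1gen n i k)).
    have [w [gw w_idx w_odd]] := A1gen_var k i_range.
    rewrite gw; apply: (poisson_ideal_plus_var (conj P_ideal P_br)) => b.
    rewrite w_idx w_odd; apply: brgen_ideal; first exact: (ideal_plus_ideal P_ideal).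
    - by rewrite -gw; apply: (ideal_plus_gen P_ideal).
    - exact: ideal_plus_sub.
  have := primeP _ _ (plus_poisson false) (plus_poisson true) (ideal_plus_mul P_ideal Pyx).
  by case=> sub; [left | right]; apply: sub; apply: (ideal_plus_gen P_ideal).
Qed.

End PoissonBracket.

Lemma inG_q n q lam i : (1 <= i <= n)%N -> inG n q lam (q i).
Proof.
move=> i_range; exists (fun k => (k == i)%:Z), (fun _ _ => 0).
rewrite [X in _ * X]big1 => [|k _]; last by apply: big1 => l _; rewrite expr0z.
have -> : q i = \prod_(1 <= k < n.+1 | k == i) q k by rewrite big_nat1_eq ltnS i_range.
by rewrite mulr1 big_mkcond; apply: eq_bigr => k _; case: eqP; rewrite ?expr1z ?expr0z.
Qed.

Lemma d_spec_eq0 n q lam r (eta mu : 'I_r -> Cc) d g :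
  is_basisG n q lam eta -> Qlin_indep mu -> d_spec eta mu d ->
  inG n q lam g -> d g = 0 -> g = 1.
Proof.
move=> [_ basis] indep dE Gg dg0; have [s [gE _]] := basis g Gg.
have s0 k : s k = 0.
  suff : [ffun k => (s k)%:~R : rat] k = 0 by rewrite ffunE => /eqP; rewrite intr_eq0 => /eqP.
  apply: indep; rewrite -[RHS]dg0 gE dE; apply: eq_bigr => l _.
  by rewrite ffunE ratr_int.
by rewrite gE big1 // => k _; rewrite s0 expr0z.
Qed.

Unset Implicit Arguments.

Theorem lemma2p14 (n : nat) (q : nat -> Cc) (lam : nat -> nat -> Cc)
  (r : nat) (eta mu : 'I_r -> Cc) (d : Cc -> Cc) :
  (forall i, (1 <= i <= n)%N -> q i != 0 /\ q i != 1) ->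
  (forall i j, (1 <= i <= n)%N -> (1 <= j <= n)%N -> lam i j != 0) ->
  (forall i, (1 <= i <= n)%N -> lam i i = 1) ->
  (forall i j, (1 <= i <= n)%N -> (1 <= j <= n)%N -> lam i j = (lam j i)^-1) ->
  torsion_freeG n q lam ->
  is_basisG n q lam eta ->
  Qlin_indep mu ->
  d_spec eta mu d ->
  (forall (B : algType Cc) (y x : nat -> B), is_Aq n q lam y x ->
     forall P : B -> Prop, prime_ideal P -> admissible n P y x (zgen y x)) /\
  (forall P : {mpoly Cc[n.*2]} -> Prop, poisson_prime n d q lam P ->
     admissible n P (Y1 n) (X1 n) (zgen (Y1 n) (X1 n))).
Proof.
move=> q_range lam_neq0 _ _ _ basis indep dE.
have q_neq0 i (i_range : (1 <= i <= n)%N) : q i != 0 by case: (q_range i i_range).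
have q_neq1 i (i_range : (1 <= i <= n)%N) : q i != 1 by case: (q_range i i_range).
split=> [B y x Aq P | P].
- exact: (Aq_admissible Aq q_neq0 lam_neq0 q_neq1).
- apply: A1_admissible => i i_range; apply: contra_neq (q_neq1 i i_range).
  exact: (d_spec_eq0 basis indep dE (inG_q q lam i_range)).
Qed.
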